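(* Let $n\ge5$, let $G$ and $H$ be non-trivial groups, let $\sigma\colon G\to S_n$ be a surjective homomorphism, and let $W=H\wr_\sigma G=H^n\rtimes_\sigma G$. Then the following are equivalent: ($\ast$) every abelian normal subgroup of $W$ is contained in $H^n$ (identified with $\{(\mathbf h,1)\}$); ($\ast\ast$) $\ker\sigma$ contains no non-trivial abelian normal subgroup of $G$.
   Context: For $n\ge2$, groups $G,H$ and a homomorphism $\sigma\colon G\to S_n$, $H\wr_\sigma G=H^n\rtimes_\sigma G$ is the semidirect product in which $G$ acts on $H^n$ by permuting coordinates through $\sigma$: $g\cdot(h_1,\dots,h_n)=(h_{\sigma(g)(1)},\dots,h_{\sigma(g)(n)})$ (with the composition convention in $S_n$ making this a left action); elements are pairs $(\mathbf h,g)$ with $(\mathbf h,g)(\mathbf k,x)=(\mathbf h\cdot g\mathbf k,gx)$. *)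

From mathcomp Require Import all_boot all_fingroup.
Set Implicit Arguments. Unset Strict Implicit. Unset Printing Implicit Defensive.

Record AbsGroup := {
  gcar :> Type;
  gmul : gcar -> gcar -> gcar;
  gone : gcar;
  ginv : gcar -> gcar;
  gmulA : forall x y z, gmul x (gmul y z) = gmul (gmul x y) z;
  gmul1 : forall x, gmul gone x = x;
  gmulV : forall x, gmul (ginv x) x = gone
}.

Section Notions.
Variables (T : Type) (mul : T -> T -> T) (one : T) (inv : T -> T).

Definition is_subgroup (N : T -> Prop) : Prop :=
  N one /\ (forall x y, N x -> N y -> N (mul x y)) /\ (forall x, N x -> N (inv x)).

Definition is_normal_subgroup (N : T -> Prop) : Prop :=
  is_subgroup N /\ (forall g x, N x -> N (mul (mul g x) (inv g))).

Definition is_abelian (N : T -> Prop) : Prop :=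
  forall x y, N x -> N y -> mul x y = mul y x.
End Notions.

Definition nontrivial (G : AbsGroup) : Prop := exists x : G, x <> gone G.

(* sigma : G -> S_n is a homomorphism (mathcomp convention: (s * t) i = t (s i)) *)
Definition is_hom (G : AbsGroup) (n : nat) (sigma : G -> {perm 'I_n}) : Prop :=
  forall x y, sigma (gmul x y) = (sigma x * sigma y)%g.

Section Wreath.
Variables (H G : AbsGroup) (n : nat) (sigma : G -> {perm 'I_n}).

(* g . (h_1,...,h_n) = (h_{sigma(g)(1)}, ..., h_{sigma(g)(n)});
   with mathcomp's composition convention this is a left action. *)
Definition wact (g : G) (h : {ffun 'I_n -> H}) : {ffun 'I_n -> H} :=
  [ffun i => h (sigma g i)].

Definition wr_type := ({ffun 'I_n -> H} * G)%type.

Definition wr_mul (a b : wr_type) : wr_type :=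
  ([ffun i => gmul (a.1 i) (wact a.2 b.1 i)], gmul a.2 b.2).

Definition wr_one : wr_type := ([ffun => gone H], gone G).

Definition wr_inv (a : wr_type) : wr_type :=
  (wact (ginv a.2) [ffun i => ginv (a.1 i)], ginv a.2).
End Wreath.

(* A normal abelian subgroup A of W = H wr_sigma G projects onto a normal
   abelian subgroup of G, whose image under sigma is a normal abelian subgroup
   of S_n; for n >= 5 that image is trivial, so the projection of A lies in
   ker sigma and is trivial by the second condition, i.e. A <= H^n.
   Conversely, an abelian normal subgroup N of G inside ker sigma acts
   trivially on H^n, so {(1, x) | x in N} is an abelian normal subgroup of W,
   which the first condition forces into H^n, i.e. N = 1. *)

From mathcomp Require Import all_boot all_fingroup.
From mathcomp Require Import zify.
Set Implicit Arguments. Unset Strict Implicit. Unset Printing Implicit Defensive.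

Section PermConjugateCommuting.
Variables (T : finType) (K : {perm T} -> Prop).
Hypothesis K_conj : forall p r, K p -> K (r * p * r^-1)%g.
Hypothesis K_comm : forall p q, K p -> K q -> commute p q.
Variables (p : {perm T}) (i : T).
Hypotheses (Kp : K p) (p_i : p i != i).

Let S := ~: [set i; p i].

(* Evaluate at i the commutation of p with its conjugate by the 3-cycle
   r = tperm (p i) k * tperm k l. *)
Lemma conj_3cycle_commute_at k l : k \in S -> l \in S -> k != l ->
  p k = tperm (p i) k (tperm k l (p l)).
Proof.
rewrite !inE !negb_or => /andP[k_i k_pi] /andP[l_i l_pi] k_l.
pose r := (tperm (p i) k * tperm k l)%g.
have := congr1 (fun s : {perm T} => s i) (K_comm Kp (K_conj r Kp)).
rewrite /r invMg !tpermV /= !permM.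
by rewrite (tpermD p_i k_i) (tpermD k_i l_i) (tpermD k_pi l_pi) !tpermL => ->.
Qed.

Lemma conj_image_in_pair k l : k \in S -> l \in S -> k != l ->
  p l \in [set k; l].
Proof.
move=> kS lS k_l; have := conj_3cycle_commute_at kS lS k_l.
rewrite !inE; case: (tpermP k l (p l)) => [->|->|pl_k pl_l]; rewrite ?eqxx ?orbT //.
have pi_pl : p i != p l.
  by rewrite (inj_eq perm_inj) eq_sym; move: lS; rewrite !inE negb_or => /andP[].
have k_pl : k != p l by apply/eqP => e; apply: pl_k.
by rewrite (tpermD pi_pl k_pl) => /perm_inj e; move: k_l; rewrite e eqxx.
Qed.

End PermConjugateCommuting.

Lemma conj_closed_commuting_perm_trivial (T : finType) (K : {perm T} -> Prop) :
  4 < #|T| ->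
  (forall p r, K p -> K (r * p * r^-1)%g) ->
  (forall p q, K p -> K q -> commute p q) ->
  forall p, K p -> p = 1%g.
Proof.
move=> T_gt4 K_conj K_comm p Kp; apply/permP => i; rewrite perm1.
apply/eqP; apply: contraT => p_i.
have : 2 < #|~: [set i; p i]|.
  by have := cardsC [set i; p i]; rewrite cards2 eq_sym p_i; lia.
case/card_gt2P => [l [k1 [k2 [[lS k1S k2S] [l_k1 k1_k2 k2_l]]]]].
have k1_l : k1 != l by rewrite eq_sym.
have pl_l : p l = l.
  have := conj_image_in_pair K_conj K_comm Kp p_i k1S lS k1_l.
  have := conj_image_in_pair K_conj K_comm Kp p_i k2S lS k2_l.
  rewrite !inE => /orP[/eqP pl_k2|/eqP //] /orP[/eqP pl_k1|/eqP //].
  by move: k1_k2; rewrite -pl_k1 -pl_k2 eqxx.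
have := conj_3cycle_commute_at K_conj K_comm Kp p_i k1S lS k1_l.
rewrite pl_l tpermR tpermR => /perm_inj k1_i.
by move: k1S; rewrite k1_i !inE eqxx.
Qed.

Section AbsGroupTheory.
Variable G : AbsGroup.

Lemma gmulrV (x : G) : gmul x (ginv x) = gone G.
Proof.
rewrite -[gmul x _]gmul1 -{1}(gmulV (ginv x)) -gmulA (gmulA (ginv x)) gmulV gmul1.
exact: gmulV.
Qed.

Lemma gmulr1 (x : G) : gmul x (gone G) = x.
Proof. by rewrite -(gmulV x) gmulA gmulrV gmul1. Qed.

Lemma ginv1 : ginv (gone G) = gone G.
Proof. by rewrite -[ginv _]gmulr1 gmulV. Qed.

Variables (n : nat) (sigma : G -> {perm 'I_n}).
Hypothesis sigma_hom : is_hom sigma.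

Lemma hom1 : sigma (gone G) = 1%g.
Proof.
apply: (mulgI (sigma (gone G))).
by rewrite -sigma_hom gmul1 mulg1.
Qed.

Lemma homV x : sigma (ginv x) = (sigma x)^-1%g.
Proof. by apply: (mulgI (sigma x)); rewrite -sigma_hom gmulrV hom1 mulgV. Qed.

Lemma hom_onto_abelian_normal_ker (N : G -> Prop) :
  4 < n -> (forall p, exists g, sigma g = p) ->
  is_normal_subgroup (@gmul G) (gone G) (@ginv G) N ->
  is_abelian (@gmul G) N ->
  forall x, N x -> sigma x = 1%g.
Proof.
move=> n_gt4 sigma_onto [_ NJ] Nab x Nx.
pose K p := exists2 y, N y & sigma y = p.
apply: (@conj_closed_commuting_perm_trivial _ K); last by exists x.
- by rewrite card_ord.
- move=> _ r [y Ny <-]; have [g <-] := sigma_onto r.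
  exists (gmul (gmul g y) (ginv g)); first exact: NJ.
  by rewrite !sigma_hom homV.
- by move=> _ _ [y Ny <-] [z Nz <-]; rewrite /commute -!sigma_hom Nab.
Qed.

End AbsGroupTheory.

Section WreathSubgroups.
Variables (H G : AbsGroup) (n : nat) (sigma : G -> {perm 'I_n}).

Local Notation W := (wr_type H G n).
Local Notation is_normal_W := (is_normal_subgroup (wr_mul sigma) (wr_one H G n) (wr_inv sigma)).
Local Notation is_normal_G := (is_normal_subgroup (@gmul G) (gone G) (@ginv G)).

Definition wr_top_lift (N : G -> Prop) (w : W) : Prop :=
  w.1 = [ffun => gone H] /\ N w.2.

Definition wr_top_proj (A : W -> Prop) (g : G) : Prop :=
  exists f, A (f, g).

Lemma wact1 g : wact sigma g [ffun => gone H] = [ffun => gone H].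
Proof. by apply/ffunP => i; rewrite !ffunE. Qed.

Lemma wr_top_lift_normal (N : G -> Prop) :
  is_hom sigma -> is_normal_G N -> (forall x, N x -> sigma x = 1%g) ->
  is_normal_W (wr_top_lift N).
Proof.
move=> sigma_hom [[N1 [NM NV]] NJ] Nker; split; first split.
- by split.
- split.
  + move=> [_ x] [_ y] [/= -> Nx] [/= -> Ny]; split; last exact: NM.
    by apply/ffunP => i; rewrite !ffunE gmul1.
  + move=> [_ x] [/= -> Nx]; split; last exact: NV.
    by apply/ffunP => i; rewrite !ffunE ginv1.
- move=> [f g] [_ x] [/= -> Nx]; split; last exact: NJ.
  (* x acts trivially, so the H^n-parts of (f, g) and its inverse cancel *)
  apply/ffunP => i; rewrite !ffunE /= gmulr1.
  rewrite sigma_hom (Nker x Nx) mulg1 -permM -sigma_hom gmulrV.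
  by rewrite (hom1 sigma_hom) perm1 gmulrV.
Qed.

Lemma wr_top_lift_abelian (N : G -> Prop) :
  is_abelian (@gmul G) N -> is_abelian (wr_mul sigma) (wr_top_lift N).
Proof.
move=> Nab [_ x] [_ y] [/= -> Nx] [/= -> Ny].
by rewrite /wr_mul /= !wact1 Nab.
Qed.

Lemma wr_top_proj_normal (A : W -> Prop) :
  is_normal_W A -> is_normal_G (wr_top_proj A).
Proof.
move=> [[A1 [AM AV]] AJ]; split; first split.
- by exists [ffun => gone H].
- split=> [x y [f Af] [f' Af']|x [f Af]].
  + by eexists; exact: AM Af Af'.
  + by eexists; exact: AV Af.
- by move=> g x [f Af]; eexists; exact: AJ ([ffun => gone H], g) _ Af.
Qed.

Lemma wr_top_proj_abelian (A : W -> Prop) :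
  is_abelian (wr_mul sigma) A -> is_abelian (@gmul G) (wr_top_proj A).
Proof. by move=> Aab x y [f Af] [f' Af']; exact: (congr1 snd (Aab _ _ Af Af')). Qed.

End WreathSubgroups.

Theorem theorem3p7 (n : nat) (G H : AbsGroup) (sigma : G -> {perm 'I_n}) :
  5 <= n -> nontrivial G -> nontrivial H ->
  is_hom sigma -> (forall p : {perm 'I_n}, exists g : G, sigma g = p) ->
  ((forall N : wr_type H G n -> Prop,
      is_normal_subgroup (wr_mul sigma) (wr_one H G n) (wr_inv sigma) N ->
      is_abelian (wr_mul sigma) N ->
      forall w, N w -> w.2 = gone G)
   <->
   (forall N : G -> Prop,
      is_normal_subgroup (@gmul G) (gone G) (@ginv G) N ->
      is_abelian (@gmul G) N ->
      (forall x, N x -> sigma x = 1%g) ->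
      forall x, N x -> x = gone G)).
Proof.
move=> n_ge5 _ _ sigma_hom sigma_onto; split.
- move=> W_cond N Nnormal Nab Nker x Nx.
  apply: (W_cond (@wr_top_lift H G n N)) (_, x) (conj erefl Nx).
  + exact: wr_top_lift_normal.
  + exact: wr_top_lift_abelian.
- move=> G_cond A Anormal Aab [f g] Afg.
  have Mnormal := wr_top_proj_normal Anormal.
  have Mab := wr_top_proj_abelian Aab.
  apply: (G_cond _ Mnormal Mab); last by exists f.
  exact: hom_onto_abelian_normal_ker.
Qed.
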